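(* There exist pairs of measurement channels $\Phi_M,\Phi_N$ corresponding to commuting $2$-outcome POVMs ($[M_0,N_0]=[M_1,N_1]=0$) that form a Maximal Entanglement Best Case pair. For instance, $M_0=\begin{pmatrix}0.9&0\\0&0.6\end{pmatrix}$, $M_1=I-M_0$, $N_0=\begin{pmatrix}0.5&0\\0&0.2\end{pmatrix}$, $N_1=I-N_0$, for which $M_0-N_0=0.4\,I_2$, give a MEBC pair.
   Context: The measurement channel of a POVM $M$ is $\Phi_M(\rho)=\sum_i\operatorname{Tr}(\rho M_i)\,|i\rangle\langle i|$. With $\Delta_\Phi=\Phi_M-\Phi_N$, Choi operator $J(\mathcal{S})=\sum_{ij}\mathcal{S}(|i\rangle\langle j|)\otimes|i\rangle\langle j|$, input dimension $d$, ME-norm $\|\mathcal{S}\|_{\mathrm{ME}}=\|J(\mathcal{S})/d\|_1$ and diamond norm $\|\mathcal{S}\|_\diamond=\max_{\rho_{AA'}}\|(\mathcal{S}\otimes I_{A'})\rho_{AA'}\|_1$, the pair is Maximal Entanglement Best Case (MEBC) if $\|\Delta_\Phi\|_{\mathrm{ME}}=\|\Delta_\Phi\|_\diamond$, i.e. a maximally entangled input state is optimal for discriminating the two channels with uniform priors. *)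

From HB Require Import structures.
From mathcomp Require Import all_boot all_order all_algebra.
From mathcomp Require Import complex mxtens reals classical_sets.
Set Implicit Arguments. Unset Strict Implicit. Unset Printing Implicit Defensive.
Import Order.TTheory GRing.Theory Num.Theory.
Local Open Scope ring_scope.

Section QI.
Variable R : realType.
Local Notation C := R[i].

Definition adj m n (X : 'M[C]_(m, n)) : 'M[C]_(n, m) := map_mx Num.conj (X^T).

Definition psd n (A : 'M[C]_n) : Prop :=
  adj A = A /\ forall v : 'cV[C]_n, 0 <= (adj v *m A *m v) 0 0.

Definition density n (rho : 'M[C]_n) : Prop := psd rho /\ \tr rho = 1.

Definition povm k d (M : 'I_k -> 'M[C]_d) : Prop :=
  (forall i, psd (M i)) /\ \sum_(i < k) M i = 1%:M.

(* trace norm ||X||_1 = Tr sqrt(X^dagger X) = sum of the square roots of the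
   eigenvalues of X^dagger X (spectral_diag: eigenvalues of the diagonalisation) *)
Definition trace_norm m n (X : 'M[C]_(m, n)) : C :=
  \sum_(i < n) sqrtC (spectral_diag (adj X *m X) 0 i).

Definition meas_channel k d (M : 'I_k -> 'M[C]_d) (rho : 'M[C]_d) : 'M[C]_k :=
  diag_mx (\row_(i < k) \tr (rho *m M i)).

Definition choi d k (S : 'M[C]_d -> 'M[C]_k) : 'M[C]_(k * d) :=
  \sum_(i < d) \sum_(j < d) tensmx (S (delta_mx i j)) (delta_mx i j : 'M[C]_d).

Definition me_norm d k (S : 'M[C]_d -> 'M[C]_k) : C :=
  trace_norm ((d%:R)^-1 *: choi S).

(* block (i,j) of an operator rho on A (x) A' (both of dimension d) w.r.t. A,
   so that rho = sum_ij |i><j| (x) rho_ij *)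
Definition block d (rho : 'M[C]_(d * d)) (i j : 'I_d) : 'M[C]_d :=
  \matrix_(a, b) rho (mxtens_index (i, a)) (mxtens_index (j, b)).

(* (S (x) id_A') rho, A' a copy of A *)
Definition ext_id d k (S : 'M[C]_d -> 'M[C]_k) (rho : 'M[C]_(d * d))
  : 'M[C]_(k * d) :=
  \sum_(i < d) \sum_(j < d) tensmx (S (delta_mx i j)) (block rho i j).

(* diamond norm: max over density operators rho_AA' of ||(S (x) id) rho||_1
   (the max, which is attained, is written as a supremum) *)
Definition diamond_norm d k (S : 'M[C]_d -> 'M[C]_k) : R :=
  sup [set x : R | exists rho : 'M[C]_(d * d),
        density rho /\ Complex x 0 = trace_norm (ext_id S rho)].

Definition MEBC k d (M N : 'I_k -> 'M[C]_d) : Prop :=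
  let Delta := fun rho => meas_channel M rho - meas_channel N rho in
  me_norm Delta = Complex (diamond_norm Delta) 0.

Definition povm2 d (P0 : 'M[C]_d) : 'I_2 -> 'M[C]_d :=
  fun i => if i == ord0 then P0 else 1%:M - P0.

Definition diag2 (a b : C) : 'M[C]_2 :=
  diag_mx (\row_(i < 2) if i == ord0 then a else b).

End QI.

(* Since M_i - N_i = c_i I, the difference channel is rho |-> Tr(rho) diag(c):
   its Choi operator is diag(c) (x) I and (Delta (x) id)(rho) = diag(c) (x) Tr_A(rho).
   For psd P, diag(|c|) (x) P is a psd square root of X^dagger X when
   X = diag(c) (x) P, so ||X||_1 = (sum_i |c_i|) Tr P.  Hence every state, in
   particular a maximally entangled one, attains ||Delta||_ME = sum_i |c_i|. *)

From HB Require Import structures.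
From mathcomp Require Import all_boot all_order all_algebra.
From mathcomp Require Import complex mxtens reals classical_sets spectral.
Set Implicit Arguments. Unset Strict Implicit. Unset Printing Implicit Defensive.
Import Order.TTheory GRing.Theory Num.Theory.
Local Open Scope ring_scope.

Local Notation qform v A := ((adj v *m A *m v) 0 0).

Lemma sum_mxtens_index (V : nmodType) m n (F : 'I_(m * n) -> V) :
  \sum_x F x = \sum_i \sum_j F (mxtens_index (i, j)).
Proof.
have idx_bij : {on [pred x | true], bijective (@mxtens_index m n)}.
  by exists (@mxtens_unindex m n) => x _; [apply: mxtens_indexK | apply: mxtens_unindexK].
by rewrite (reindex _ idx_bij) /= pair_bigA; apply: eq_bigr => -[i j].
Qed.

Section Tensor.
Variable K : comPzRingType.

Lemma tensmxZl m n p q (a : K) (A : 'M[K]_(m, n)) (B : 'M[K]_(p, q)) :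
  tensmx (a *: A) B = a *: tensmx A B.
Proof. by apply/matrixP => i j; rewrite !mxE mulrA. Qed.

Lemma tensmxZr m n p q (a : K) (A : 'M[K]_(m, n)) (B : 'M[K]_(p, q)) :
  tensmx A (a *: B) = a *: tensmx A B.
Proof. by apply/matrixP => i j; rewrite !mxE mulrCA. Qed.

Lemma tensmx_sumr m n p q (I : finType) (A : 'M[K]_(m, n)) (B : I -> 'M[K]_(p, q)) :
  tensmx A (\sum_i B i) = \sum_i tensmx A (B i).
Proof.
apply/matrixP => i j; rewrite !mxE !summxE mulr_sumr.
by apply: eq_bigr => k _; rewrite mxE.
Qed.

Lemma mxtrace_tensmx m n (A : 'M[K]_m) (B : 'M[K]_n) :
  \tr (tensmx A B) = \tr A * \tr B.
Proof.
rewrite /mxtrace sum_mxtens_index mulr_suml; apply: eq_bigr => i _.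
by rewrite mulr_sumr; apply: eq_bigr => j _; rewrite tensmxE.
Qed.

End Tensor.

Section PositiveSemidefinite.
Variable R : realType.
Local Notation C := R[i].

Lemma adjE m n (X : 'M[C]_(m, n)) i j : adj X i j = (X j i)^*.
Proof. by rewrite /adj !mxE. Qed.

Lemma adjM m n p (A : 'M[C]_(m, n)) (B : 'M[C]_(n, p)) :
  adj (A *m B) = adj B *m adj A.
Proof. by rewrite /adj trmx_mul map_mxM. Qed.

Lemma adjK m n (A : 'M[C]_(m, n)) : adj (adj A) = A.
Proof. by apply/matrixP => i j; rewrite !adjE conjCK. Qed.

Lemma adj_tensmx m n p q (A : 'M[C]_(m, n)) (B : 'M[C]_(p, q)) :
  adj (tensmx A B) = tensmx (adj A) (adj B).
Proof. by apply/matrixP => i j; rewrite !mxE rmorphM. Qed.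

Lemma adj_diag_mx n (e : 'rV[C]_n) : adj (diag_mx e) = diag_mx (map_mx Num.conj e).
Proof.
apply/matrixP => i j; rewrite adjE !mxE eq_sym.
by case: eqP => [->|_]; rewrite ?mulr1n ?mulr0n ?conjC0.
Qed.

Lemma qformE n (v : 'cV[C]_n) (A : 'M[C]_n) :
  qform v A = \sum_y \sum_x (v x 0)^* * A x y * v y 0.
Proof.
rewrite mxE; apply: eq_bigr => y _; rewrite mxE mulr_suml.
by apply: eq_bigr => x _; rewrite adjE.
Qed.

Lemma qform_diag n (v : 'cV[C]_n) (e : 'rV[C]_n) :
  qform v (diag_mx e) = \sum_i e 0 i * `|v i 0| ^+ 2.
Proof.
rewrite -mulmxA mxE; apply: eq_bigr => i _.
by rewrite mul_diag_mx !mxE normCK mulrCA [_^* * _]mulrC.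
Qed.

Lemma psd_diag_mx n (e : 'rV[C]_n) : (forall i, 0 <= e 0 i) -> psd (diag_mx e).
Proof.
move=> e_ge0; split.
  by rewrite adj_diag_mx; congr diag_mx; apply/matrixP => i j; rewrite !mxE (ord1 i) geC0_conj.
by move=> v; rewrite qform_diag; apply: sumr_ge0 => i _; rewrite mulr_ge0 ?exprn_ge0.
Qed.

Lemma psd1 n : psd (1%:M : 'M[C]_n).
Proof. by rewrite -diag_const_mx; apply: psd_diag_mx => i; rewrite mxE ler01. Qed.

Lemma psd_diag_tensmx m n (e : 'rV[C]_m) (P : 'M[C]_n) :
  (forall i, 0 <= e 0 i) -> psd P -> psd (tensmx (diag_mx e) P).
Proof.
move=> e_ge0 [Ph P_ge0]; split.
  by rewrite adj_tensmx Ph; have [-> _] := psd_diag_mx e_ge0.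
move=> v; pose w i := \col_p v (mxtens_index (i, p)) 0.
have -> : qform v (tensmx (diag_mx e) P) = \sum_i e 0 i * qform (w i) P.
  rewrite qformE sum_mxtens_index; apply: eq_bigr => j _.
  rewrite qformE mulr_sumr; apply: eq_bigr => q _.
  rewrite sum_mxtens_index (bigD1 j) //= [X in _ + X]big1 ?addr0 => [|i /negbTE ij].
    rewrite mulr_sumr; apply: eq_bigr => p _.
    by rewrite tensmxE !mxE eqxx mulr1n !mulrA [_^* * e 0 j]mulrC.
  by apply: big1 => p _; rewrite tensmxE !mxE ij mulr0n !(mul0r, mulr0).
by apply: sumr_ge0 => i _; apply: mulr_ge0.
Qed.

Definition partial_trace n (rho : 'M[C]_(n * n)) : 'M[C]_n := \sum_i block rho i i.

Lemma psd_partial_trace n (rho : 'M[C]_(n * n)) : psd rho -> psd (partial_trace rho).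
Proof.
move=> [rhoh rho_ge0]; split.
  apply/matrixP => p q; rewrite adjE !summxE rmorph_sum; apply: eq_bigr => i _.
  by rewrite !mxE -[in RHS]rhoh adjE.
move=> v; rewrite mulmx_sumr mulmx_suml summxE; apply: sumr_ge0 => i _.
pose u := \col_x (if (mxtens_unindex x).1 == i then v (mxtens_unindex x).2 0 else 0)
  : 'cV[C]_(n * n).
suff -> : qform v (block rho i i) = qform u rho by [].
rewrite !qformE [RHS]sum_mxtens_index [RHS](bigD1 i) //= [X in _ + X]big1 ?addr0 => [|j /negbTE ji].
  apply: eq_bigr => q _; rewrite [RHS]sum_mxtens_index [RHS](bigD1 i) //=.
  rewrite [X in _ + X]big1 ?addr0 => [|j /negbTE ji].
    by apply: eq_bigr => p _; rewrite !mxE !mxtens_indexK /= eqxx.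
  by apply: big1 => p _; rewrite !mxE !mxtens_indexK /= ji conjC0 !mul0r.
by apply: big1 => q _; apply: big1 => x _; rewrite !mxE mxtens_indexK /= ji mulr0.
Qed.

Lemma mxtrace_partial_trace n (rho : 'M[C]_(n * n)) : \tr (partial_trace rho) = \tr rho.
Proof.
rewrite [in RHS]/mxtrace sum_mxtens_index /mxtrace exchange_big; apply: eq_bigr => p _.
by rewrite summxE; apply: eq_bigr => i _; rewrite mxE.
Qed.

Lemma density_diag_delta n (i : 'I_n) : density (diag_mx (delta_mx 0 i) : 'M[C]_n).
Proof.
split; first by apply: psd_diag_mx => j; rewrite mxE ler0n.
rewrite mxtrace_diag (bigD1 i) //= big1 => [|j /negbTE ji]; first by rewrite !mxE !eqxx addr0.
by rewrite !mxE ji andbF.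
Qed.

End PositiveSemidefinite.

Section TraceNorm.
Variable R : realType.
Local Notation C := R[i].

Lemma commute_diag_mx_sqrtC n (W : 'M[C]_n) (d : 'rV[C]_n) :
  W *m diag_mx d = diag_mx d *m W ->
  W *m diag_mx (map_mx sqrtC d) = diag_mx (map_mx sqrtC d) *m W.
Proof.
move=> /matrixP WdE; apply/matrixP => i j; have := WdE i j.
rewrite !mul_mx_diag !mul_diag_mx !mxE => Wd.
have [->|Wij_neq0] := eqVneq (W i j) 0; first by rewrite mul0r mulr0.
by rewrite (mulfI Wij_neq0 (etrans Wd (mulrC _ _))) mulrC.
Qed.

Lemma psd_add_qform_eq0 n (A B : 'M[C]_n) (u : 'cV[C]_n) :
  psd A -> psd B -> (A + B) *m u = 0 -> qform u B = 0.
Proof.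
move=> [_ A_ge0] [_ B_ge0] ABu0.
have : qform u A + qform u B = 0.
  transitivity (qform u (A + B)); first by rewrite mulmxDr mulmxDl [RHS]mxE.
  by rewrite -mulmxA ABu0 mulmx0 mxE.
by move/eqP; rewrite paddr_eq0 // => /andP[_ /eqP].
Qed.

(* A psd square root of a diagonal matrix has the square roots of its
   diagonal on its diagonal: W commutes with S = sqrt (W W), and
   (W + S) (W - S) = 0 forces the diagonal of W - S to vanish. *)
Lemma psd_sqr_diag_mxtrace n (W : 'M[C]_n) (d : 'rV[C]_n) :
  psd W -> W *m W = diag_mx d -> \tr W = \sum_i sqrtC (d 0 i).
Proof.
move=> W_psd WWE; have [Wh _] := W_psd.
have Wc i k : W k i = (W i k)^* by rewrite -{1}Wh adjE.
have dE i : d 0 i = \sum_k `|W i k| ^+ 2.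
  have /matrixP/(_ i i) := WWE; rewrite !mxE eqxx mulr1n => <-.
  by apply: eq_bigr => k _; rewrite normCK (Wc i k).
pose s := map_mx sqrtC d; pose S := diag_mx s.
have s_ge0 i : 0 <= s 0 i.
  by rewrite mxE sqrtC_ge0 dE; apply: sumr_ge0 => k _; apply: exprn_ge0.
have S_psd : psd S := psd_diag_mx s_ge0.
have WS : W *m S = S *m W.
  by apply: commute_diag_mx_sqrtC; rewrite -WWE mulmxA.
have SS : S *m S = W *m W.
  rewrite mulmx_diag WWE; congr diag_mx; apply/matrixP => i j.
  by rewrite !mxE (ord1 i) -expr2 sqrtCK.
have sWS j : s 0 j * `|W j j - s 0 j| ^+ 2 = 0.
  pose u := col j (W - S).
  have WSu0 : (W + S) *m u = 0.
    by rewrite /u colE mulmxA mulmxDl !mulmxBr WS SS addrA subrK subrr mul0mx.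
  have /eqP := psd_add_qform_eq0 W_psd S_psd WSu0.
  rewrite qform_diag => /eqP/psumr_eq0P/(_ j isT).
  rewrite !mxE eqxx mulr1n; apply=> i _.
  exact: mulr_ge0 (s_ge0 i) (exprn_ge0 _ _).
rewrite /mxtrace; apply: eq_bigr => j _.
move/eqP: (sWS j); rewrite mulf_eq0 expf_eq0 normr_eq0 subr_eq0 /= mxE.
case/orP => [/eqP sj0|/eqP -> //]; rewrite sj0.
have /eqP := sj0; rewrite sqrtC_eq0 dE => /eqP/psumr_eq0P Wj_eq0.
have /eqP := Wj_eq0 (fun k _ => exprn_ge0 2 (normr_ge0 _)) j isT.
by rewrite expf_eq0 normr_eq0 => /eqP.
Qed.

Lemma trace_norm_psd_sqrt m n (X : 'M[C]_(m, n)) (B : 'M[C]_n) :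
  psd B -> B *m B = adj X *m X -> trace_norm X = \tr B.
Proof.
move=> [Bh B_ge0] BBE; rewrite /trace_norm.
set Q := adj X *m X in BBE *.
have /orthomx_spectralP QE : Q \is normalmx.
  by apply/normalmxP; change (Q *m adj Q = adj Q *m Q); rewrite /Q adjM adjK.
have U_unitary := spectral_unitarymx Q.
set U := spectralmx Q in QE U_unitary; set sp := spectral_diag Q in QE *.
have UUh : U *m adj U = 1%:M := unitarymxP U_unitary.
have UhU : adj U *m U = 1%:M.
  by have := mulmxKtV 1%:M U_unitary erefl; rewrite mul1mx.
rewrite (invmx_unitary U_unitary) in QE.
pose W := U *m B *m adj U.
have W_psd : psd W.
  split; first by rewrite /W !adjM adjK Bh mulmxA.
  by move=> v; have := B_ge0 (adj U *m v); rewrite adjM adjK /W !mulmxA.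
have WWE : W *m W = diag_mx sp.
  rewrite /W -!mulmxA (mulmxA (adj U)) UhU mul1mx (mulmxA B) BBE QE.
  by rewrite !mulmxA UUh mul1mx -mulmxA UUh mulmx1.
by rewrite -(psd_sqr_diag_mxtrace W_psd WWE) /W mxtrace_mulC mulmxA UhU mul1mx.
Qed.

Lemma trace_norm_diag_tensmx m n (c : 'rV[C]_m) (P : 'M[C]_n) : psd P ->
  trace_norm (tensmx (diag_mx c) P) = (\sum_i `|c 0 i|) * \tr P.
Proof.
move=> P_psd; have [Ph _] := P_psd.
rewrite (@trace_norm_psd_sqrt _ _ _ (tensmx (diag_mx (map_mx Num.norm c)) P)).
- by rewrite mxtrace_tensmx mxtrace_diag; congr (_ * _); apply: eq_bigr => i _; rewrite mxE.
- by apply: psd_diag_tensmx => // i; rewrite mxE.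
rewrite adj_tensmx !tensmx_mul Ph adj_diag_mx !mulmx_diag; congr (tensmx (diag_mx _) _).
by apply/matrixP => i j; rewrite !mxE -expr2 normCK mulrC.
Qed.

End TraceNorm.

Lemma mxtrace_delta (K : pzSemiRingType) n (i j : 'I_n) :
  \tr (delta_mx i j : 'M[K]_n) = (i == j)%:R.
Proof.
rewrite /mxtrace (bigD1 i) //= big1 => [|k /negbTE ki]; rewrite !mxE ?ki //.
by rewrite eqxx /= addr0.
Qed.

Section TraceScaledChannel.
Variables (R : realType) (d k : nat) (A : 'M[R[i]]_k) (S : 'M[R[i]]_d -> 'M[R[i]]_k).
Hypothesis SE : forall rho, S rho = \tr rho *: A.

Lemma choi_trace_scaled : choi S = tensmx A 1%:M.
Proof.
rewrite [1%:M]matrix_sum_delta /choi tensmx_sumr; apply: eq_bigr => i _.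
rewrite tensmx_sumr; apply: eq_bigr => j _.
by rewrite SE tensmxZl -tensmxZr mxtrace_delta mxE.
Qed.

Lemma ext_id_trace_scaled rho : ext_id S rho = tensmx A (partial_trace rho).
Proof.
rewrite /ext_id /partial_trace tensmx_sumr; apply: eq_bigr => i _.
rewrite (bigD1 i) //= big1 ?addr0 => [|j /negbTE ji].
  by rewrite SE mxtrace_delta eqxx scale1r.
by rewrite SE mxtrace_delta eq_sym ji scale0r tens0mx.
Qed.

End TraceScaledChannel.

Lemma meas_channel_sub_scalar (R : realType) k d (M N : 'I_k -> 'M[R[i]]_d)
    (c : 'rV[R[i]]_k) rho :
  (forall i, M i - N i = (c 0 i)%:M) ->
  meas_channel M rho - meas_channel N rho = \tr rho *: diag_mx c.
Proof.
move=> MNE; apply/matrixP => i j; rewrite /meas_channel !mxE.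
case: (i == j); rewrite ?mulr0n ?subrr ?mulr0 // !mulr1n.
have -> : \tr (rho *m M i) - \tr (rho *m N i) = \tr (rho *m (M i - N i)).
  by rewrite mulmxBr raddfB.
by rewrite MNE mul_mx_scalar mxtraceZ mulrC.
Qed.

Theorem MEBC_scalar_sub (R : realType) k d (M N : 'I_k -> 'M[R[i]]_d)
    (c : 'rV[R[i]]_k) :
  (0 < d)%N -> (forall i, M i - N i = (c 0 i)%:M) -> MEBC M N.
Proof.
move=> d_gt0 MNE; rewrite /MEBC /=; set Delta := fun rho => _.
have DeltaE rho : Delta rho = \tr rho *: diag_mx c := meas_channel_sub_scalar rho MNE.
set t := \sum_i `|c 0 i|.
have t_real : Complex (complex.Re t) 0 = t by apply/RRe_real/ger0_real/sumr_ge0.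
have ext_id_normE rho : density rho -> trace_norm (ext_id Delta rho) = t.
  move=> [rho_psd rho_tr]; rewrite (ext_id_trace_scaled DeltaE).
  rewrite trace_norm_diag_tensmx; last exact: psd_partial_trace.
  by rewrite mxtrace_partial_trace rho_tr mulr1.
have -> : me_norm Delta = t.
  rewrite /me_norm (choi_trace_scaled DeltaE) -tensmxZl -linearZ /=.
  rewrite trace_norm_diag_tensmx ?mxtrace1; last exact: psd1.
  under eq_bigr do rewrite mxE normrM normfV normr_nat.
  by rewrite -mulr_sumr mulrC mulrA mulfV ?mul1r // pnatr_eq0 -lt0n.
rewrite -t_real; congr Complex.
rewrite /diamond_norm (_ : [set x | _]%classic = [set complex.Re t]%classic) ?sup1 //.
apply/seteqP; split => x /=.
  by case=> rho [/ext_id_normE ->]; rewrite -t_real => -[].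
move=> ->; have dd_gt0 : (0 < d * d)%N by rewrite muln_gt0 d_gt0.
exists (diag_mx (delta_mx 0 (Ordinal dd_gt0))).
by split; [apply: density_diag_delta | rewrite ext_id_normE ?t_real //; apply: density_diag_delta].
Qed.

Section TwoOutcomePovm.
Variables (R : realType) (d : nat).
Local Notation C := R[i].

Lemma povm_povm2 (P : 'M[C]_d) : psd P -> psd (1%:M - P) -> povm (povm2 P).
Proof.
move=> P_psd P'_psd; split; first by case=> -[|[|//]] i_lt2; rewrite /povm2.
by rewrite big_ord_recl big_ord1 /povm2 /= addrC subrK.
Qed.

Lemma povm2_comm (P Q : 'M[C]_d) i :
  P *m Q = Q *m P -> povm2 P i *m povm2 Q i = povm2 Q i *m povm2 P i.
Proof.
rewrite /povm2; case: (i == ord0) => // PQ.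
exact: comm_mxB (comm_mx1 _) (comm_mx_sym (comm_mxB (comm_mx1 _) (comm_mx_sym PQ))).
Qed.

Lemma povm2_sub_scalar (P Q : 'M[C]_d) (a : C) i :
  P - Q = a%:M -> povm2 P i - povm2 Q i = (if i == ord0 then a else - a)%:M.
Proof.
rewrite /povm2; case: (i == ord0) => // PQ.
by rewrite opprB addrC addrA subrK -opprB PQ raddfN.
Qed.

End TwoOutcomePovm.

Section Diag2.
Variable R : realType.
Local Notation C := R[i].

Lemma psd_diag2 (x y : C) : 0 <= x -> 0 <= y -> psd (diag2 x y).
Proof. by move=> x_ge0 y_ge0; apply: psd_diag_mx => i; rewrite mxE; case: ifP. Qed.

Lemma diag2B (x y x' y' : C) : diag2 x y - diag2 x' y' = diag2 (x - x') (y - y').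
Proof.
by rewrite /diag2 -linearB; congr diag_mx; apply/matrixP => i j; rewrite !mxE; case: ifP.
Qed.

Lemma diag2_const (a : C) : diag2 a a = a%:M.
Proof.
by rewrite /diag2 -diag_const_mx; congr diag_mx; apply/matrixP => i j; rewrite !mxE; case: ifP.
Qed.

Lemma povm_povm2_diag2 (x y : C) :
  0 <= x <= 1 -> 0 <= y <= 1 -> povm (povm2 (diag2 x y)).
Proof.
move=> /andP[x_ge0 x_le1] /andP[y_ge0 y_le1].
apply: povm_povm2; first exact: psd_diag2.
by rewrite -diag2_const diag2B; apply: psd_diag2; rewrite subr_ge0.
Qed.

End Diag2.

Theorem corollary4 (R : realType) :
  let M := povm2 (diag2 (9 / 10 : R[i]) (6 / 10)) in
  let N := povm2 (diag2 (5 / 10 : R[i]) (2 / 10)) in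
  [/\ povm M /\ povm N,
      M ord0 *m N ord0 = N ord0 *m M ord0,
      M ord_max *m N ord_max = N ord_max *m M ord_max,
      M ord0 - N ord0 = (4 / 10 : R[i])%:M
    & MEBC M N].
Proof.
move=> M N.
have tenth_unit (n : nat) : (n <= 10)%N -> 0 <= (n%:R / 10 : R[i]) <= 1.
  by move=> n_le10; rewrite divr_ge0 ?ler0n //= ler_pdivrMr ?ltr0n // mul1r ler_nat.
have MN0 : M ord0 - N ord0 = (4 / 10 : R[i])%:M.
  by rewrite /M /N /povm2 eqxx diag2B -!mulrBl -!natrB // diag2_const.
split.
- by split; apply: povm_povm2_diag2; apply: tenth_unit.
- exact/povm2_comm/diag_mxC.
- exact/povm2_comm/diag_mxC.
- exact: MN0.
pose c := \row_(i < 2) if i == ord0 then 4 / 10 else - (4 / 10) : R[i].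
apply: (@MEBC_scalar_sub _ _ _ _ _ c) => // i.
by rewrite mxE; apply: povm2_sub_scalar.
Qed.
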